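(* Let $d\ge 0$ be an integer, let $b_0=0<b_1<\dots<b_d$ be real numbers, and let $p_0(x),p_1(x),\dots,p_d(x)\in\mathbf{R}[x]$ be polynomials with real coefficients, not all of them zero. Then the function $$F(x)=\sum_{i=0}^d p_i(x)\log(x+b_i),$$ defined for $x>0$, has only finitely many positive real zeros. In particular, the sequence $(\log n)_{n\ge 1}$ is not holonomic.
   Context: A sequence of complex numbers $(a_n)_{n\ge 1}$ is called holonomic (P-recursive, D-finite) if there exist an integer $d\ge 0$ and polynomials $p_0(x),\dots,p_d(x)\in\mathbf{C}[x]$, not all zero, such that $p_d(n)a_{n+d}+\cdots+p_1(n)a_{n+1}+p_0(n)a_n=0$ for every integer $n\ge 1$. Here $\log$ denotes the natural logarithm. *)

From HB Require Import structures.
From mathcomp Require Import all_boot all_order all_algebra.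
From mathcomp Require Import all_classical all_reals all_analysis.
From mathcomp Require Import complex.
Set Implicit Arguments. Unset Strict Implicit. Unset Printing Implicit Defensive.
Import Order.TTheory GRing.Theory Num.Theory.
Local Open Scope ring_scope.

Definition holonomic (C : numClosedFieldType) (a : nat -> C) : Prop :=
  exists (d : nat) (p : 'I_d.+1 -> {poly C}),
    (exists i, p i != 0) /\
    forall n : nat, (1 <= n)%N ->
      \sum_(i < d.+1) (p i).[n%:R] * a (n + i)%N = 0.

From HB Require Import structures.
From mathcomp Require Import all_boot all_order all_algebra.
From mathcomp Require Import all_classical all_reals all_analysis.
From mathcomp Require Import complex.
From mathcomp Require Import zify ring.
From mathcomp Require polyorder cauchyreals.
Set Implicit Arguments. Unset Strict Implicit. Unset Printing Implicit Defensive.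
Import Order.TTheory GRing.Theory Num.Theory.
Local Open Scope ring_scope.
Local Open Scope classical_set_scope.

(* Write F(x) = \sum_i p_i(x) ln(x - c_i) with distinct c_i.  The n-th derivative of
   p(x) ln(x - c) is p^(n)(x) ln(x - c) + r_n(x) / (x - c)^n for a polynomial r_n of
   degree at most deg p whose coefficient of degree deg p is nonzero once n > deg p.
   Hence for n beyond every deg p_i the logarithms are gone, r_i is not divisible by
   (x - c_i)^n, and F^(n) = \sum_i r_i(x) / (x - c_i)^n is a nonzero rational function,
   with finitely many zeros.  By Rolle's theorem, if g' has finitely many zeros on an
   interval then so does g; going back down from F^(n) gives the claim for F.
   A recurrence for ln n with complex polynomial coefficients yields, by taking real or
   imaginary parts, one with real coefficients, i.e. such an F with c_i = -i vanishing
   at every positive integer. *)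

Section Separated.
Local Open Scope order_scope.
Context {disp : Order.disp_t} {T : orderType disp}.

Lemma finite_set_separated (A S : set T) :
  finite_set S ->
  (forall x y, A x -> A y -> x < y -> exists2 c, S c & x < c < y) ->
  finite_set A.
Proof.
move=> /finite_seqP[s ->] sep.
pose above x := count (fun c => x < c) s.
have above_split x y : x < y ->
    above x = (above y + count (fun c => (x < c <= y)%O) s)%N.
  move=> xy; rewrite /above; elim: (s) => //= z t ->.
  have [yz|zy] := ltP y z; first by rewrite (lt_trans xy yz) andbF /=; lia.
  by case: (x < z) => /=; lia.
have above_decr x y : A x -> A y -> x < y -> (above y < above x)%N.
  move=> Ax Ay xy; have [c cs cxy] := sep x y Ax Ay xy.
  have : (0 < count (fun c => (x < c <= y)%O) s)%N.
    by rewrite -has_count; apply/hasP; exists c => //; case/andP: cxy => -> /ltW.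
  rewrite (above_split _ _ xy); lia.
have above_inj : {in A &, injective above}.
  move=> x y; rewrite !inE => Ax Ay exy.
  by case: (ltgtP x y) => // xy; [have := above_decr _ _ Ax Ay xy|
                                  have := above_decr _ _ Ay Ax xy]; rewrite exy ltnn.
rewrite -(eq_finite_set (inj_card_eq above_inj)).
apply: (@sub_finite_set _ _ `I_(size s).+1); last exact: finite_II.
by move=> _ [z _ <-]; rewrite /= ltnS count_size.
Qed.

End Separated.

Section FiniteZeros.
Variable R : realType.

Lemma finite_zeros_of_derive (a : R) (f f' : R -> R) :
  (forall x, a < x -> is_derive x 1 f (f' x)) ->
  finite_set [set x | a < x /\ f' x = 0] ->
  finite_set [set x | a < x /\ f x = 0].
Proof.
move=> df fin'; apply: (finite_set_separated fin') => x y [ax fx] [ay fy] xy.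
have [c] : exists2 c, c \in `]x, y[%R & is_derive c 1 f 0.
  apply: Rolle => //; last by rewrite fx fy.
    by move=> z; rewrite in_itv /= => /andP[xz _]; have [] := df z (lt_trans ax xz).
  apply: derivable_within_continuous => z; rewrite in_itv /= => /andP[xz _].
  by have [] := df z (lt_le_trans ax xz).
rewrite in_itv /= => cxy dc0; exists c => //.
have ac : a < c by rewrite (lt_trans ax) // (andP cxy).1.
by split => //; move: (df c ac) dc0 => [_ <-] [_ ->].
Qed.

Lemma finite_zeros_of_iter_derive (a : R) (G : nat -> R -> R) (N : nat) :
  (forall n x, a < x -> is_derive x 1 (G n) (G n.+1 x)) ->
  finite_set [set x | a < x /\ G N x = 0] ->
  finite_set [set x | a < x /\ G 0%N x = 0].
Proof.
elim: N G => [//|N IH] G dG finN.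
apply: (@finite_zeros_of_derive a (G 0%N) (G 1%N) (dG 0%N)).
by apply: (IH (G \o S)) => // n x; exact: dG.
Qed.

End FiniteZeros.

Lemma finite_set_roots (R : idomainType) (q : {poly R}) :
  q != 0 -> finite_set [set x | q.[x] = 0].
Proof.
move=> q0; apply: contrapT => /(infinite_set_fset (size q))[B Broot sizeB].
have rootsB : all (root q) (finmap.enum_fset B).
  by apply/allP => z zB; apply/rootP/Broot.
by have := max_poly_roots q0 rootsB (finmap.fset_uniq B); rewrite ltnNge sizeB.
Qed.

Lemma coefM_top (R : nzRingType) (p q : {poly R}) (i j : nat) :
  (size p <= i.+1)%N -> (size q <= j.+1)%N -> (p * q)`_(i + j) = p`_i * q`_j.
Proof.
move=> sp sq; rewrite coefM.
have ii : (i < (i + j).+1)%N by rewrite ltnS leq_addr.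
rewrite (bigD1 (Ordinal ii)) //= addKn big1 ?addr0 // => k /eqP/val_eqP /= ki.
case: (ltngtP k i) ki => // [ki|ik] _.
  by rewrite [q`__]nth_default ?mulr0 //; apply: leq_trans sq _; lia.
by rewrite [p`__]nth_default ?mul0r //; apply: leq_trans sp _.
Qed.

Lemma partial_fractions_neq0 (F : fieldType) (I : finType) (c : I -> F)
    (r : I -> {poly F}) (N : nat) (i0 : I) :
  injective c -> ~~ (('X - (c i0)%:P) ^+ N %| r i0) ->
  \sum_i r i * \prod_(l | l != i) ('X - (c l)%:P) ^+ N != 0.
Proof.
move=> c_inj ndvd; apply: contra ndvd => /eqP sum0.
set D := ('X - (c i0)%:P) ^+ N.
set U := fun i => \prod_(l | l != i) ('X - (c l)%:P) ^+ N.
have D_others : D %| \sum_(i | i != i0) r i * U i.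
  elim/big_ind: _ => [|p q|i ii0]; [exact: dvdp0|exact: dvdp_add|].
  by apply: dvdp_mull; rewrite /U (bigD1 i0) ?dvdp_mulIl // eq_sym.
have coprime_DU : coprimep D (U i0).
  apply: coprimep_expl; rewrite coprimep_sym.
  rewrite coprimep_XsubC /root horner_prod prodf_seq_neq0.
  apply/allP => l _; apply/implyP => li0.
  by rewrite horner_exp hornerXsubC expf_neq0 // subr_eq0 (inj_eq c_inj) eq_sym.
have : D %| \sum_i r i * U i by rewrite sum0 dvdp0.
by rewrite (bigD1 i0) //= (dvdp_addl _ D_others) Gauss_dvdpl.
Qed.

Section LogPolyNumerator.
Variable R : realDomainType.

(* Differentiating p^(n)(x) ln(x - c) + r(x) / (x - c)^n gives
   p^(n+1)(x) ln(x - c) + (p^(n)(x) (x - c)^n + (x - c) r'(x) - n r(x)) / (x - c)^(n+1). *)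
Fixpoint plog_num (p : {poly R}) (c : R) (n : nat) : {poly R} :=
  if n is m.+1 then
    let r := plog_num p c m in
    p^`(m) * ('X - c%:P) ^+ m + ('X - c%:P) * r^`() - r *+ m
  else 0.

Lemma size_plog_num (p : {poly R}) (c : R) (n : nat) :
  (size (plog_num p c n) <= size p)%N.
Proof.
elim: n => [|n IH] /=; first by rewrite size_poly0.
set r := plog_num p c n.
have size_head : (size (p^`(n) * ('X - c%:P) ^+ n)%R <= size p)%N.
  have [pn|np] := leqP (size p) n; first by rewrite derivn_poly0 ?mul0r ?size_poly0.
  apply: leq_trans (size_polyMleq _ _) _; rewrite size_exp_XsubC addnS /=.
  by rewrite cauchyreals.size_derivn subnK // ltnW.
have size_mid : (size (('X - c%:P) * r^`())%R <= size p)%N.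
  have [->|r0] := eqVneq r 0; first by rewrite deriv0 mulr0 size_poly0.
  apply: leq_trans (size_polyMleq _ _) _; rewrite size_XsubC polyorder.size_deriv.
  by rewrite add2n /= prednK ?size_poly_gt0.
have size_tail : (size (r *+ n)%R <= size p)%N.
  by rewrite -scaler_nat (leq_trans (size_scale_leq _ _)).
apply: leq_trans (size_polyD _ _) _; rewrite geq_max size_polyN size_tail andbT.
by apply: leq_trans (size_polyD _ _) _; rewrite geq_max size_head size_mid.
Qed.

Lemma coef_plog_num_top (p : {poly R}) (c : R) (n j : nat) : size p = j.+1 ->
  (plog_num p c n.+1)`_j = p`_j * (j ^_ n)%:R + (plog_num p c n)`_j * (j%:R - n%:R).
Proof.
move=> sp; set r := plog_num p c n.
have sr : (size r <= j.+1)%N by rewrite -sp size_plog_num.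
have head : (p^`(n) * ('X - c%:P) ^+ n)`_j = p`_j * (j ^_ n)%:R.
  have [nj|jn] := leqP n j; last first.
    by rewrite derivn_poly0 ?sp // ffact_small // mul0r coef0 mulr0.
  have lead1 : (('X - c%:P) ^+ n)`_n = 1.
    by have /monicP := monic_exp n (monicXsubC c); rewrite /lead_coef size_exp_XsubC.
  rewrite -{1}(subnK nj) coefM_top ?size_exp_XsubC //; last first.
    by rewrite cauchyreals.size_derivn sp subSn.
  by rewrite lead1 mulr1 coef_derivn subnKC // mulr_natr.
have mid : (('X - c%:P) * r^`())`_j = r`_j *+ j.
  rewrite mulrBl coefB coefXM coefCM.
  case: j sp sr {head} => [|j] sp sr.
    by rewrite coef_deriv [r`_1]nth_default // mulr0 subr0 mulr0n.
  by rewrite !coef_deriv [r`_j.+2]nth_default // mul0rn mulr0 subr0.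
by rewrite /= -/r coefB coefD coefMn head mid mulrBr !mulr_natr addrA.
Qed.

Lemma plog_num_top_neq0 (p : {poly R}) (c : R) (n : nat) :
  p != 0 -> (size p <= n)%N -> (plog_num p c n)`_(size p).-1 != 0.
Proof.
move=> p0; set j := (size p).-1.
have sp : size p = j.+1 by rewrite prednK ?size_poly_gt0.
have pj0 : p`_j != 0 by rewrite -lead_coefE lead_coef_eq0.
rewrite sp; elim: n => [//|n IH]; rewrite ltnS leq_eqVlt => /orP[/eqP <-|jn].
  by rewrite coef_plog_num_top // subrr mulr0 addr0 ffactnn mulf_neq0.
rewrite coef_plog_num_top // ffact_small // mulr0 add0r mulf_neq0 ?IH //.
by rewrite subr_eq0 eqr_nat neq_ltn jn.
Qed.

Lemma plog_num_ndvd (p : {poly R}) (c : R) (n : nat) :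
  p != 0 -> (size p <= n)%N -> ~~ (('X - c%:P) ^+ n %| plog_num p c n).
Proof.
move=> p0 pn; have r0 : plog_num p c n != 0.
  by apply/eqP => r0; have := plog_num_top_neq0 c p0 pn; rewrite r0 coef0 eqxx.
apply/negP => /(dvdp_leq r0)/leq_trans/(_ (size_plog_num p c n)).
by rewrite size_exp_XsubC ltnNge pn.
Qed.

End LogPolyNumerator.

Section LogPolyDerivatives.
Variable R : realType.

Definition plog_derivn (p : {poly R}) (c : R) (n : nat) (x : R) : R :=
  p^`(n).[x] * ln (x - c) + (plog_num p c n).[x] / (x - c) ^+ n.

Lemma plog_derivn0 (p : {poly R}) (c x : R) :
  plog_derivn p c 0 x = p.[x] * ln (x - c).
Proof. by rewrite /plog_derivn derivn0 horner0 mul0r addr0. Qed.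

Lemma is_derive_ln_subr (c x : R) : c < x ->
  is_derive x 1 (fun y => ln (y - c)) (x - c)^-1.
Proof.
move=> cx; have xc : 0 < x - c by rewrite subr_gt0.
have := is_derive1_comp (g := center c) (is_derive1_ln xc) (is_derive_shift x 1 (- c)).
by rewrite mulr1.
Qed.

Lemma is_derive_inv_exp_subr (c x : R) (n : nat) : c < x ->
  is_derive x 1 (fun y => ((y - c) ^+ n)^-1) (- n%:R / (x - c) ^+ n.+1).
Proof.
move=> cx; have xc0 : x - c != 0 by rewrite subr_eq0 gt_eqF.
have dpow := is_deriveX n (is_derive_shift x 1 (- c)).
have -> : (fun y => ((y - c) ^+ n)^-1) = fun y => ((center c ^+ n) y)^-1.
  by apply: funext => y; rewrite exprfctE.
apply: is_derive_eq; first by apply: is_deriveV dpow; rewrite exprfctE expf_neq0.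
have scaleE (a b : R) : a *: b = a * b by [].
rewrite exprfctE /= !scaleE mulr1.
case: n {dpow} => [|n]; first by rewrite !mul0r mulr0 oppr0 mul0r.
move: (x - c) xc0 => y y0; have z0 : y ^+ n != 0 by rewrite expf_neq0.
by rewrite !exprS; move: (y ^+ n) z0 => z z0; field; rewrite z0 y0.
Qed.

Lemma is_derive_plog_derivn (p : {poly R}) (c x : R) (n : nat) : c < x ->
  is_derive x 1 (plog_derivn p c n) (plog_derivn p c n.+1 x).
Proof.
move=> cx; set r := plog_num p c n.
have -> : plog_derivn p c n = horner p^`(n) * (fun y => ln (y - c)) +
                              horner r * (fun y => ((y - c) ^+ n)^-1) by [].
have dA := is_derive_poly p^`(n) x; have dr := is_derive_poly r x.
have dln := is_derive_ln_subr cx; have dinv := is_derive_inv_exp_subr n cx.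
apply: is_derive_eq (is_deriveD (is_deriveM dA dln) (is_deriveM dr dinv)) _.
have scaleE (a b : R) : a *: b = a * b by [].
rewrite /plog_derivn /= -/r !scaleE exprS.
rewrite !(hornerD, hornerN, hornerM, horner_exp, hornerX, hornerC, hornerMn).
have xc0 : x - c != 0 by rewrite subr_eq0 gt_eqF.
have z0 : (x - c) ^+ n != 0 by rewrite expf_neq0.
move: ((x - c) ^+ n) z0 => z z0; move: (x - c) xc0 => y y0.
by field; rewrite z0 y0.
Qed.

End LogPolyDerivatives.

Theorem finite_zeros_sum_poly_ln (R : realType) (a : R) (k : nat)
    (c : 'I_k -> R) (p : 'I_k -> {poly R}) :
  injective c -> (forall i, c i <= a) -> (exists i, p i != 0) ->
  finite_set [set x | a < x /\ \sum_i (p i).[x] * ln (x - c i) = 0].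
Proof.
move=> c_inj c_le [i0 pi0].
pose N := (\sum_i size (p i))%N.
have size_le_N i : (size (p i) <= N)%N by rewrite /N (bigD1 i) //= leq_addr.
pose G n x := \sum_i plog_derivn (p i) (c i) n x.
have dG n x : a < x -> is_derive x 1 (G n) (G n.+1 x).
  move=> ax; rewrite [G n](_ : _ = \sum_i plog_derivn (p i) (c i) n); last first.
    by apply: funext => y; rewrite fct_sumE.
  by apply: is_derive_sum => i; apply: is_derive_plog_derivn; apply: le_lt_trans ax.
apply: (@sub_finite_set _ _ [set x | a < x /\ G 0%N x = 0]).
  move=> x [ax Fx]; split => //; rewrite /G -[in RHS]Fx.
  by apply: eq_bigr => i _; rewrite plog_derivn0.
apply: (finite_zeros_of_iter_derive dG (N := N)).
pose Q := \sum_i plog_num (p i) (c i) N * \prod_(l | l != i) ('X - (c l)%:P) ^+ N.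
have Q_neq0 : Q != 0.
  exact: partial_fractions_neq0 c_inj (plog_num_ndvd (c i0) pi0 (size_le_N i0)).
apply: sub_finite_set (finite_set_roots Q_neq0) => x [ax GNx0] /=.
have xc0 i : x - c i != 0 by rewrite subr_eq0 gt_eqF // (le_lt_trans (c_le i)).
suff -> : Q.[x] = G N x * \prod_l (x - c l) ^+ N by rewrite GNx0 mul0r.
rewrite /Q /G horner_sum mulr_suml; apply: eq_bigr => i _.
rewrite /plog_derivn derivn_poly0 // horner0 mul0r add0r hornerM horner_prod.
rewrite [in RHS](bigD1 i) //= mulrA divfK ?expf_neq0 //.
by congr (_ * _); apply: eq_bigr => l _; rewrite horner_exp hornerXsubC.
Qed.

Local Open Scope complex_scope.

Lemma mul_real_complexE (R : rcfType) (z : R[i]) (r : R) :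
  z * r%:C = r *: (z : Rcomplex R).
Proof. by case: z => a b; congr (_ +i* _) => /=; rewrite mulr0 ?subr0 ?add0r mulrC. Qed.

Lemma horner_map_scalar (R : rcfType) (f : {scalar Rcomplex R}) (q : {poly R[i]})
    (x : R) :
  (map_poly f q).[x] = f q.[x%:C].
Proof.
rewrite /map_poly horner_poly horner_coef linear_sum; apply: eq_bigr => k _.
by rewrite -rmorphXn mul_real_complexE linearZ /= mulrC.
Qed.

Lemma holonomic_real_recurrence (R : rcfType) (a : nat -> R) :
  holonomic (fun n => (a n)%:C : R[i]) ->
  exists d (q : 'I_d.+1 -> {poly R}), (exists i, q i != 0) /\
    forall n, (1 <= n)%N -> \sum_(i < d.+1) (q i).[n%:R] * a (n + i)%N = 0.
Proof.
move=> [d [p [[i0 pi0] rec]]].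
have [f fp_neq0] : exists f : {scalar Rcomplex R}, map_poly f (p i0) != 0.
  have [Re0|] := eqVneq (map_poly (@complex.Re R) (p i0)) 0;
    last by exists (@complex.Re R : {scalar Rcomplex R}).
  have [Im0|] := eqVneq (map_poly (@complex.Im R) (p i0)) 0;
    last by exists (@complex.Im R : {scalar Rcomplex R}).
  case/negP: pi0; apply/eqP/polyP => j.
  move/polyP/(_ j): Re0; move/polyP/(_ j): Im0; rewrite !coef_map !coef0.
  by case: (p i0)`_j => /= u v -> ->.
exists d, (fun i => map_poly f (p i)); split; first by exists i0.
move=> n n1; rewrite -[RHS](linear0 f) -(rec n n1) linear_sum; apply: eq_bigr => i _.
rewrite horner_map_scalar -(rmorph_nat (real_complex R)).
by rewrite mul_real_complexE linearZ /= mulrC.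
Qed.

Lemma not_holonomic_ln (R : realType) : ~ holonomic (fun n => (ln (n%:R : R))%:C : R[i]).
Proof.
move=> /holonomic_real_recurrence[d [q [q_neq0 rec]]].
have c_inj : injective (fun i : 'I_d.+1 => - (i%:R : R)).
  by move=> i j /oppr_inj/eqP; rewrite eqr_nat => /eqP/val_inj.
have c_le0 i : - (i%:R : R) <= 0 by rewrite oppr_le0.
have fin := finite_zeros_sum_poly_ln c_inj c_le0 q_neq0.
have succ_inj : {in [set: nat] &, injective (fun m : nat => m.+1%:R : R)}.
  by move=> m l _ _ /eqP; rewrite eqr_nat => /eqP[].
apply: infinite_nat; rewrite -(eq_finite_set (inj_card_eq succ_inj)).
apply: sub_finite_set fin => _ [m _ <-]; split; first exact: ltr0Sn.
by rewrite -[RHS](rec m.+1) //; apply: eq_bigr => i _; rewrite opprK natrD.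
Qed.

Theorem mainTheorem1 :
  (forall (R : realType) (d : nat) (b : 'I_d.+1 -> R) (p : 'I_d.+1 -> {poly R}),
     b ord0 = 0 ->
     (forall i j : 'I_d.+1, (i < j)%N -> b i < b j) ->
     (exists i, p i != 0) ->
     finite_set [set x : R | 0 < x /\
        \sum_(i < d.+1) (p i).[x] * ln (x + b i) = 0]) /\
  (forall R : realType,
     ~ holonomic (fun n : nat => ((ln (n%:R : R))%:C)%C : R[i])).
Proof.
split=> [R d b p b0 b_incr p_neq0|R]; last exact: not_holonomic_ln.
have c_inj : injective (fun i => - b i).
  move=> i j /oppr_inj bij; apply: val_inj.
  by case: (ltngtP i j) => // ij; have := b_incr _ _ ij; rewrite bij ltxx.
have c_le0 i : - b i <= 0.
  rewrite oppr_le0 -b0; have [i0|i_gt0] := posnP i; last by rewrite ltW // b_incr.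
  by rewrite (_ : i = ord0) //; apply: val_inj.
apply: sub_finite_set (finite_zeros_sum_poly_ln c_inj c_le0 p_neq0) => x [x0 Fx].
by split => //; rewrite -[RHS]Fx; apply: eq_bigr => i _; rewrite opprK.
Qed.
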